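(* Let $n\ge1$ and let $F$ and $G$ be permutations of $\mathbb{F}_{2^n}$ such that $F(x)=G(x)$ for all $x\in\mathbb{F}_{2^n}\setminus P$, for some nonempty subset $P\subseteq\mathbb{F}_{2^n}$. If $c\in\mathbb{F}_{2^n}$ and $c\neq 1$, then ${}_c\Delta_F\le {}_c\Delta_G+\#P$.
   Context: For $F:\mathbb{F}_{2^n}\to\mathbb{F}_{2^n}$ and $c\in\mathbb{F}_{2^n}$, ${}_cD_aF(x)=F(x+a)+cF(x)$ (characteristic $2$). For $a,b\in\mathbb{F}_{2^n}$, ${}_c\Delta_F(a,b)$ is the number of $x\in\mathbb{F}_{2^n}$ with ${}_cD_aF(x)=b$, and the $c$-differential uniformity is ${}_c\Delta_F=\max\{{}_c\Delta_F(a,b): a,b\in\mathbb{F}_{2^n},\ a\neq 0 \text{ if } c=1\}$. $\#P$ denotes the cardinality of $P$. *)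

From HB Require Import structures.
From mathcomp Require Import all_boot all_order all_algebra all_field.
Set Implicit Arguments. Unset Strict Implicit. Unset Printing Implicit Defensive.
Import GRing.Theory.
Local Open Scope ring_scope.

(* c-derivative  _cD_a F (x) = F (x + a) + c F(x)  (characteristic 2) *)
Definition cder (K : finFieldType) (F : K -> K) (c a : K) (x : K) : K :=
  F (x + a) + c * F x.

Definition cDelta (K : finFieldType) (F : K -> K) (c a b : K) : nat :=
  #|[set x : K | cder F c a x == b]|.

Definition cDU (K : finFieldType) (F : K -> K) (c : K) : nat :=
  \max_(ab : K * K | (c != 1) || (ab.1 != 0)) cDelta F c ab.1 ab.2.

From HB Require Import structures.
From mathcomp Require Import all_boot all_order all_algebra all_field.
From mathcomp Require Import ring.
Import GRing.Theory.
Local Open Scope ring_scope.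

(* A solution x of F(x + a) + c F(x) = b with x, x + a outside P is also a
   solution for G.  The remaining solutions are mapped into P by sending x to
   whichever of x, x + a lies in P; this map is injective because, in
   characteristic 2 and for c <> 1, x and x + a cannot both be solutions unless
   a = 0, as F(x + a) + c F(x) = F(x) + c F(x + a) forces F(x + a) = F(x). *)

Section PointwiseBound.

Variables (K : finFieldType) (F G : K -> K) (c a b : K).
Hypotheses (hchar : 2%N \in [pchar K]) (injF : injective F) (hc : c != 1).

Lemma cder_shift_eq0 {x} : cder F c a x = b -> cder F c a (x + a) = b -> a = 0.
Proof.
rewrite /cder -addrA addrr_pchar2 // addr0 => <- /eqP.
have -> : (F x + c * F (x + a) == F (x + a) + c * F x)
        = ((1 - c) * (F x - F (x + a)) == 0).
  by rewrite -subr_eq0; congr (_ == 0); ring.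
rewrite mulf_eq0 subr_eq0 eq_sym (negbTE hc) subr_eq0 => /eqP /injF.
by rewrite -{1}(addr0 x) => /addrI/esym.
Qed.

Lemma card_cder_sol_near_le (P : {set K}) :
  (#|[set x | (cder F c a x == b) && ((x \in P) || ((x + a)%R \in P))]| <= #|P|)%N.
Proof.
set S := [set x | _].
pose f x := if x \in P then x else x + a.
have f_inj : {in S &, injective f}.
  have shift x y : x \in S -> y \in S -> y + a = x -> x = y.
    rewrite !inE => /andP[/eqP solx _] /andP[/eqP soly _] yax.
    rewrite -yax in solx; rewrite (cder_shift_eq0 soly solx) in yax.
    by rewrite -yax addr0.
  move=> x y Sx Sy; rewrite /f.
  case: ifP => _; case: ifP => _ fxy //.
  - exact: shift (esym fxy).
  - exact/esym/(shift _ _ Sy Sx).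
  - exact: addIr fxy.
rewrite -(card_in_imset f_inj); apply/subset_leq_card/subsetP => z /imsetP[x].
rewrite inE /f => /andP[_ nearx] ->.
by case: ifP nearx.
Qed.

Lemma cDelta_le_add (P : {set K}) :
  (forall x, x \notin P -> F x = G x) ->
  (cDelta F c a b <= cDelta G c a b + #|P|)%N.
Proof.
move=> FG; rewrite /cDelta.
set near := [set x | (x \in P) || (x + a \in P)].
rewrite -(cardsID near) addnC leq_add //.
  apply/subset_leq_card/subsetP => x.
  rewrite !inE negb_or => /andP[/andP[xP xaP]].
  by rewrite /cder FG // FG.
apply: leq_trans (card_cder_sol_near_le P).
by apply/subset_leq_card/subsetP => x; rewrite !inE.
Qed.

End PointwiseBound.

Lemma cDU_le_add (K : finFieldType) (F G : K -> K) (c : K) (k : nat) :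
  (forall a b, cDelta F c a b <= cDelta G c a b + k)%N ->
  (cDU F c <= cDU G c + k)%N.
Proof.
move=> FG; apply/bigmax_leqP => ab admissible.
apply: leq_trans (FG ab.1 ab.2) _; rewrite leq_add2r.
exact: (@leq_bigmax_cond _ (fun ab : K * K => (c != 1) || (ab.1 != 0))
  (fun ab : K * K => cDelta G c ab.1 ab.2) ab admissible).
Qed.

Theorem mainTheorem2 (K : finFieldType) (n : nat)
  (hn : (1 <= n)%N) (hchar : 2%N \in [pchar K]) (hcard : #|K| = (2 ^ n)%N)
  (F G : K -> K) (hF : bijective F) (hG : bijective G)
  (P : {set K}) (hP : P != set0)
  (hFG : forall x : K, x \notin P -> F x = G x)
  (c : K) (hc : c != 1) :
  (cDU F c <= cDU G c + #|P|)%N.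
Proof.
apply: cDU_le_add => a b.
exact: cDelta_le_add hchar (bij_inj hF) hc P hFG.
Qed.
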